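(* Let $q$ be a root of unity with $q^8\ne1$, $N=\mathrm{ord}(q^4)$, $\epsilon=q^{N^2}$. Let $z_0\in\mathbb C$ and $\sigma\in\mathbb C^\times$ with $\epsilon^2z_0=\sigma^N+\sigma^{-N}\ne\pm2$, let $\vec w\in\mathbb C^4$ and $(\vec s,\vec t)\in E^0_{\sigma,\vec w}$. Let $V$ have basis $\{v_i:i\in\mathbb Z/N\}$ and $$d_i=\frac{\lambda_ic_1+(q^2+q^{-2})c_\infty}{\hat\lambda'_i\hat\lambda'_{i-1}},\qquad d'_i=\frac{\lambda_ic_\infty+(q^2+q^{-2})c_1}{\hat\lambda'_i\hat\lambda'_{i-1}},$$ where $c_1=w_1w_3+w_2w_4$, $c_\infty=w_1w_4+w_2w_3$. Then $\rho(p_j)=w_j$ ($j=1,\dots,4$), $\rho(\alpha_0)v_i=\lambda_iv_i$, $\rho(\alpha_1)v_i=q^{4i+2}\sigma s_iv_{i+1}+d'_iv_i+q^{-4i+2}\sigma^{-1}t_{i-1}v_{i-1}$, $\rho(\alpha_\infty)v_i=s_iv_{i+1}+d_iv_i+t_{i-1}v_{i-1}$ define a representation $\rho:\mathcal S_q(\Sigma_{0,4})\to\mathrm{End}(V)$ (i.e. a representation of the sliced algebra $\mathcal S_q(\Sigma_{0,4})/\langle p_j-w_j\rangle$), and $\rho(A_0)=z_0\,\mathrm{id}_V$.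
   Context: $\mathcal S_q(\Sigma_{0,4})$ is the Kauffman bracket skein algebra of the four-punctured sphere, with central peripheral curves $p_1,\dots,p_4$ and curves $\alpha_0,\alpha_1,\alpha_\infty$ separating punctures as $\{1,2\}|\{3,4\}$, $\{1,3\}|\{2,4\}$, $\{1,4\}|\{2,3\}$. With $\gamma=p_1p_2p_3p_4+\sum p_i^2$, $c_0=p_1p_2+p_3p_4$, $c_1=p_1p_3+p_2p_4$, $c_\infty=p_1p_4+p_2p_3$, $H(x,y,z;a,b,c,g)=x^2+y^2+z^2-xzy+ax+by+cz+g$, it is generated over $\mathbb C[p_1,\dots,p_4]$ by $\alpha_0,\alpha_1,\alpha_\infty$ with relations $H(q^2\alpha_0,q^2\alpha_1,q^{-2}\alpha_\infty;c_0,c_1,c_\infty,\gamma)=(q^2+q^{-2})^2$, $q^2\alpha_0\alpha_\infty-q^{-2}\alpha_\infty\alpha_0=(q^4-q^{-4})\alpha_1+(q^2-q^{-2})c_1$, $q^2\alpha_1\alpha_0-q^{-2}\alpha_0\alpha_1=(q^4-q^{-4})\alpha_\infty+(q^2-q^{-2})c_\infty$, $q^2\alpha_\infty\alpha_1-q^{-2}\alpha_1\alpha_\infty=(q^4-q^{-4})\alpha_0+(q^2-q^{-2})c_0$. $A_0=\epsilon^2T_N(\alpha_0)$ with $T_N$ the Chebyshev polynomial ($T_N(t+t^{-1})=t^N+t^{-N}$). Notation: $\kappa(a,b,c)=a^2+b^2+c^2+abc-4$; $\lambda_i=q^{4i}\sigma+q^{-4i}\sigma^{-1}$, $\lambda'_i=q^{4i+2}\sigma+q^{-4i-2}\sigma^{-1}$,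 $\hat\lambda_i=q^{4i}\sigma-q^{-4i}\sigma^{-1}$, $\hat\lambda'_i=q^{4i+2}\sigma-q^{-4i-2}\sigma^{-1}$ (indices in $\mathbb Z/N$); $r_i(\sigma,\vec w)=\dfrac{\kappa(w_1,w_2,\lambda'_i)\kappa(w_3,w_4,\lambda'_i)}{\hat\lambda_i\hat\lambda_{i+1}(\hat\lambda'_i)^2}$; $E^0_{\sigma,\vec w}=\{(s_1,\dots,s_N,t_1,\dots,t_N)\in\mathbb C^{2N}:s_it_i=r_i(\sigma,\vec w)\ \forall i\}$. These representations are called type-$0$. *)

From HB Require Import structures.
From mathcomp Require Import all_boot all_order all_algebra.
From mathcomp Require Import reals complex.
Set Implicit Arguments. Unset Strict Implicit. Unset Printing Implicit Defensive.
Import Order.TTheory GRing.Theory Num.Theory.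
Local Open Scope ring_scope.

(* The complex numbers are modelled as R[i] for a real number field R : realType
   (any realType is (isomorphic to) the reals). *)

Section Skein.
Variable C : comNzRingType.

(* Chebyshev polynomial T_k evaluated at a square matrix A (acting on column
   vectors): T_0 = 2, T_1 = x, T_(k+1) = x T_k - T_(k-1); equivalently
   T_k(t + t^-1) = t^k + t^-k. *)
Fixpoint chebT_pair (n : nat) (A : 'M[C]_n) (k : nat) : 'M[C]_n * 'M[C]_n :=
  match k with
  | 0 => (2%:M, A)
  | k'.+1 => let (a, b) := chebT_pair A k' in (b, A *m b - a)
  end.
Definition chebT_mx (n : nat) (A : 'M[C]_n) (k : nat) : 'M[C]_n :=
  (chebT_pair A k).1.

(* Central elements of the sliced algebra, with p_j specialized to w_j. *)
Definition sk_gamma (w1 w2 w3 w4 : C) := w1 * w2 * w3 * w4 + (w1^+2 + w2^+2 + w3^+2 + w4^+2).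
Definition sk_c0 (w1 w2 w3 w4 : C) := w1 * w2 + w3 * w4.
Definition sk_c1 (w1 w2 w3 w4 : C) := w1 * w3 + w2 * w4.
Definition sk_cinf (w1 w2 w3 w4 : C) := w1 * w4 + w2 * w3.

Definition skH (n : nat) (x y z : 'M[C]_n) (a b c g : C) : 'M[C]_n :=
  x *m x + y *m y + z *m z - x *m z *m y + a *: x + b *: y + c *: z + g%:M.

End Skein.

Section SkeinField.
Variable C : fieldType.

(* The images (A0, A1, Ainf) of (alpha_0, alpha_1, alpha_infty) together with
   p_j |-> w_j id define a representation of S_q(Sigma_{0,4}) (i.e. of its
   quotient by <p_j - w_j>) iff they satisfy the defining relations of the
   presentation of S_q(Sigma_{0,4}) over C[p_1,...,p_4]. *)
Definition skein04_rep (q w1 w2 w3 w4 : C) (n : nat) (A0 A1 Ainf : 'M[C]_n) : Prop :=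
  let c0 := sk_c0 w1 w2 w3 w4 in
  let c1 := sk_c1 w1 w2 w3 w4 in
  let cinf := sk_cinf w1 w2 w3 w4 in
  let g := sk_gamma w1 w2 w3 w4 in
  [/\ skH (q^+2 *: A0) (q^+2 *: A1) (q^-2 *: Ainf) c0 c1 cinf g
        = ((q^+2 + q^-2)^+2)%:M,
      q^+2 *: (A0 *m Ainf) - q^-2 *: (Ainf *m A0)
        = (q^+4 - q^-4) *: A1 + ((q^+2 - q^-2) * c1)%:M,
      q^+2 *: (A1 *m A0) - q^-2 *: (A0 *m A1)
        = (q^+4 - q^-4) *: Ainf + ((q^+2 - q^-2) * cinf)%:M
    & q^+2 *: (Ainf *m A1) - q^-2 *: (A1 *m Ainf)
        = (q^+4 - q^-4) *: A0 + ((q^+2 - q^-2) * c0)%:M].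

Definition kappa (a b c : C) := a^+2 + b^+2 + c^+2 + a * b * c - 4.

(* For an index i (in Z/N, represented by a natural number; the quantities
   below only depend on i mod N since q^(4N) = 1):
   lambda_i = q^(4i) s + q^(-4i) s^-1, etc. *)
Definition lam (q s : C) (i : nat) := q^+(4 * i) * s + (q^+(4 * i))^-1 * s^-1.
Definition lamp (q s : C) (i : nat) := q^+(4 * i+2) * s + (q^+(4 * i+2))^-1 * s^-1.
Definition lamh (q s : C) (i : nat) := q^+(4 * i) * s - (q^+(4 * i))^-1 * s^-1.
Definition lamph (q s : C) (i : nat) := q^+(4 * i+2) * s - (q^+(4 * i+2))^-1 * s^-1.

Definition r_i (N : nat) (q s w1 w2 w3 w4 : C) (i : 'I_N) :=
  kappa w1 w2 (lamp q s i) * kappa w3 w4 (lamp q s i)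
  / (lamh q s i * lamh q s (ordS i) * (lamph q s i)^+2).

Definition in_E0 (N : nat) (q sig w1 w2 w3 w4 : C) (s t : 'I_N -> C) : Prop :=
  forall i : 'I_N, s i * t i = r_i q sig w1 w2 w3 w4 i.

Definition d_i (N : nat) (q sig w1 w2 w3 w4 : C) (i : 'I_N) :=
  (lam q sig i * sk_c1 w1 w2 w3 w4 + (q^+2 + q^-2) * sk_cinf w1 w2 w3 w4)
  / (lamph q sig i * lamph q sig (ord_pred i)).
Definition d'_i (N : nat) (q sig w1 w2 w3 w4 : C) (i : 'I_N) :=
  (lam q sig i * sk_cinf w1 w2 w3 w4 + (q^+2 + q^-2) * sk_c1 w1 w2 w3 w4)
  / (lamph q sig i * lamph q sig (ord_pred i)).

(* Matrices in the basis (v_i)_{i in Z/N}, entry (j, i) = coefficient of v_j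
   in rho(.) v_i (matrices act on column vectors). *)
Definition rho_a0 (N : nat) (q sig : C) : 'M[C]_N :=
  \matrix_(j, i) (if j == i then lam q sig i else 0).
Definition rho_a1 (N : nat) (q sig w1 w2 w3 w4 : C) (s t : 'I_N -> C) : 'M[C]_N :=
  \matrix_(j, i)
    ((if j == ordS i then q^+(4 * i+2) * sig * s i else 0)
     + (if j == i then d'_i q sig w1 w2 w3 w4 i else 0)
     + (if j == ord_pred i then q^+2 / q^+(4 * i) * sig^-1 * t (ord_pred i) else 0)).
Definition rho_ainf (N : nat) (q sig w1 w2 w3 w4 : C) (s t : 'I_N -> C) : 'M[C]_N :=
  \matrix_(j, i)
    ((if j == ordS i then s i else 0)
     + (if j == i then d_i q sig w1 w2 w3 w4 i else 0)
     + (if j == ord_pred i then t (ord_pred i) else 0)).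

End SkeinField.

From HB Require Import structures.
From mathcomp Require Import all_boot all_order all_algebra.
From mathcomp Require Import reals complex.
From mathcomp Require Import ring.
Import Order.TTheory GRing.Theory Num.Theory.
Local Open Scope ring_scope.
Set Implicit Arguments. Unset Strict Implicit.

(* In the basis (v_i), rho(alpha_0) is diagonal and rho(alpha_1), rho(alpha_infty)
   are cyclic tridiagonal, so each relation is checked entry by entry: entry (j, i)
   of any product only involves v_(i-2), ..., v_(i+2).  Off the diagonal this is a
   rational identity in x = q^(4i), q^2 and sigma; on the diagonal the entries
   s_i t_i and s_(i-1) t_(i-1) appear only as products, which E^0 turns into
   r_i and r_(i-1).  The denominators are all of the form x sigma - x^-1 sigma^-1
   with x^(2N) = 1, and vanish only if sigma^N + sigma^-N = +-2.  Finally
   rho(alpha_0) = diag(a_i + a_i^-1) with a_i = q^(4i) sigma and a_i^N = sigma^N,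
   so T_N(rho(alpha_0)) is the scalar sigma^N + sigma^-N = epsilon^2 z_0, and
   epsilon^4 = q^(4N^2) = 1. *)

Section CyclicOrdinals.
Variable N : nat.
Hypothesis N_gt2 : (2 < N)%N.

Lemma eq_ordSF (i : 'I_N) : (i == ordS i) = false.
Proof.
apply/negbTE; rewrite -val_eqE /=; have hi := ltn_ord i.
have [e|ne] := eqVneq i.+1 N.
  by rewrite e modnn; apply/eqP=> h; move: N_gt2; rewrite -e h.
rewrite modn_small; first by rewrite neq_ltn ltnSn.
by rewrite ltn_neqAle ne hi.
Qed.

Lemma eq_ordSSF (i : 'I_N) : (i == ordS (ordS i)) = false.
Proof.
apply/negbTE; rewrite -val_eqE /= -[(_ %% N).+1]addn1 modnDml addn1.
have hi := ltn_ord i.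
have [e|ne] := eqVneq i.+2 N.
  by rewrite e modnn; apply/eqP=> h; move: N_gt2; rewrite -e h.
have [e1|ne1] := eqVneq i.+1 N.
  have -> : (i.+2 %% N = 1)%N by rewrite -[i.+2]addn1 e1 modnDl modn_small // ltnW.
  by apply/eqP => h; move: N_gt2; rewrite -e1 h.
rewrite modn_small; first by rewrite neq_ltn (ltn_trans (ltnSn i) (ltnSn _)).
by rewrite ltn_neqAle ne /= ltn_neqAle ne1 hi.
Qed.

Lemma eq_ord_predF (i : 'I_N) : (i == ord_pred i) = false.
Proof. by rewrite -(inj_eq (@ordS_inj N)) ord_predK eq_sym eq_ordSF. Qed.

Lemma eq_ord_pred2F (i : 'I_N) : (i == ord_pred (ord_pred i)) = false.
Proof. by rewrite -2!(inj_eq (@ordS_inj N)) !ord_predK eq_sym eq_ordSSF. Qed.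

End CyclicOrdinals.

Section CyclicTridiagonal.
Variables (C : pzRingType) (N : nat).

(* Column i is the image of v_i = f i v_(i+1) + g i v_i + h i v_(i-1), mod N. *)
Definition tridiag_mx (f g h : 'I_N -> C) : 'M[C]_N :=
  \matrix_(j, i) ((if j == ordS i then f i else 0) + (if j == i then g i else 0)
     + (if j == ord_pred i then h i else 0)).

Lemma sum_mul_if_eq (F : 'I_N -> C) x c :
  \sum_k F k * (if k == x then c else 0) = F x * c.
Proof. by rewrite (bigD1 x) //= eqxx big1 ?addr0 // => k /negbTE ->; rewrite mulr0. Qed.

Lemma mulmx_tridiag_entry (A : 'M[C]_N) f g h j i :
  (A *m tridiag_mx f g h) j i
    = A j (ordS i) * f i + A j i * g i + A j (ord_pred i) * h i.
Proof.
rewrite mxE; under eq_bigr => k _ do rewrite mxE !mulrDr.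
by rewrite !big_split /= !sum_mul_if_eq.
Qed.

Lemma mulmx_diag_entry (A : 'M[C]_N) (f : 'I_N -> C) j i :
  (A *m \matrix_(j, i) (if j == i then f i else 0)) j i = A j i * f i.
Proof.
rewrite mxE; under eq_bigr => k _ do rewrite mxE.
by rewrite sum_mul_if_eq.
Qed.

End CyclicTridiagonal.

Section PowersModN.
Variables (C : fieldType) (N : nat) (q : C).
Hypotheses (q4N : q ^+ (4 * N) = 1) (q_neq0 : q != 0).

Lemma expr4_modn m : q ^+ (4 * (m %% N)) = q ^+ (4 * m).
Proof.
rewrite {2}(divn_eq m N) mulnDr exprD (mulnC (m %/ N)%N) mulnA.
by rewrite [q ^+ (4 * N * _)]exprM q4N expr1n mul1r.
Qed.

(* Unlike [exprD], this does not also split q ^+ (4 * i) by conversion. *)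
Lemma expr4_add2 k : q ^+ (4 * k + 2) = q ^+ (4 * k) * q ^+ 2.
Proof. exact: exprD. Qed.

Lemma expr4_ordS (k : 'I_N) : q ^+ (4 * ordS k) = q ^+ (4 * k) * q ^+ 4.
Proof. by rewrite /= expr4_modn mulnSr exprD. Qed.

Lemma expr4_ord_pred (k : 'I_N) : q ^+ (4 * ord_pred k) = q ^+ (4 * k) / q ^+ 4.
Proof.
apply: (canRL (mulfK _)); first by rewrite expf_neq0.
have N_gt0 : (0 < N)%N by apply: leq_ltn_trans (ltn_ord k).
rewrite /= expr4_modn -exprD -mulnSr prednK ?addn_gt0 ?N_gt0 ?orbT //.
by rewrite mulnDr exprD q4N mulr1.
Qed.

Lemma expr4i_order2N i : (q ^+ (4 * i)) ^+ (2 * N) = 1.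
Proof.
rewrite -exprM (_ : (4 * i * (2 * N) = 4 * N * (2 * i))%N); last by ring.
by rewrite exprM q4N expr1n.
Qed.

Lemma expr2_order2N : (q ^+ 2) ^+ (2 * N) = 1.
Proof. by rewrite -exprM mulnA q4N. Qed.

Lemma expr4_order2N : (q ^+ 4) ^+ (2 * N) = 1.
Proof. by have := expr4i_order2N 1; rewrite muln1. Qed.

End PowersModN.

Section GenericSigma.
Variables (C : fieldType) (N : nat) (sig : C).
Hypotheses (sig_neq0 : sig != 0)
  (sigN_neq2 : sig ^+ N + sig ^- N != 2) (sigN_neqN2 : sig ^+ N + sig ^- N != -2).

Lemma sigN_neq2_order_gt0 : (0 < N)%N.
Proof. by move: sigN_neq2; case: N => //; rewrite expr0 invr1 eqxx. Qed.

Lemma expr2N_eq1_neq0 (x : C) : x ^+ (2 * N) = 1 -> x != 0.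
Proof.
move=> x2N; apply/eqP => x0; move: x2N.
rewrite x0 expr0n gtn_eqF ?muln_gt0 ?sigN_neq2_order_gt0 // => /eqP.
by rewrite eq_sym oner_eq0.
Qed.

Lemma hat_lambda_neq0 (x : C) : x ^+ (2 * N) = 1 -> x * sig - x^-1 * sig^-1 != 0.
Proof.
move=> x2N; apply/negP => /eqP e.
have xsig2 : (x * sig) ^+ 2 = 1.
  move/eqP: e; rewrite subr_eq0 -invfM => /eqP e.
  by rewrite expr2 {2}e mulfV ?mulf_neq0 ?(expr2N_eq1_neq0 x2N).
have : (sig ^+ N) ^+ 2 = 1.
  by rewrite -exprM mulnC -[sig ^+ _]mul1r -x2N -exprMn exprM xsig2 expr1n.
move/eqP; rewrite sqrf_eq1 => /orP[] /eqP sigN.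
  by move: sigN_neq2; rewrite sigN invr1 eqxx.
by move: sigN_neqN2; rewrite sigN invrN1 -opprD eqxx.
Qed.

(* The shape in which [field] leaves the denominators lamh and lamph. *)
Lemma sqr_sub_sqr_neq0 (m v : C) :
  v != 0 -> m ^+ (2 * N) = v ^+ (2 * N) -> m * sig * (m * sig) - v * v != 0.
Proof.
move=> v_neq0 mv.
have mv2N : (m / v) ^+ (2 * N) = 1 by rewrite exprMn exprVn mv mulfV ?expf_neq0.
have m_neq0 : m != 0.
  by have := expr2N_eq1_neq0 mv2N; rewrite mulf_eq0 negb_or => /andP[].
have -> : m * sig * (m * sig) - v * v
          = (m / v * sig - (m / v)^-1 * sig^-1) * (m / v * sig * (v * v)).
  by field; rewrite v_neq0 sig_neq0 m_neq0.
by rewrite mulf_neq0 ?hat_lambda_neq0 // !mulf_neq0 ?invr_neq0.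
Qed.

Lemma sqr_sub1_neq0 (m : C) : m ^+ (2 * N) = 1 -> m * sig * (m * sig) - 1 != 0.
Proof.
move=> m2N; have := @sqr_sub_sqr_neq0 m 1 (oner_neq0 C).
by rewrite expr1n mulr1; apply.
Qed.

End GenericSigma.

Lemma eq_through_product (C : comPzRingType) (L R : C -> C -> C) x y r :
  x * y = r -> (forall a b, L a b - R a b = L 1 (a * b) - R 1 (a * b)) ->
  L 1 r = R 1 r -> L x y = R x y.
Proof. by move=> <- LR e; apply/eqP; rewrite -subr_eq0 LR e subrr. Qed.

Section Relations.
Variables (C : fieldType) (N : nat) (q sig w1 w2 w3 w4 : C) (s t : 'I_N -> C).
Hypotheses (N_gt2 : (2 < N)%N) (q4N : q ^+ (4 * N) = 1) (q_neq0 : q != 0)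
  (sig_neq0 : sig != 0)
  (sigN_neq2 : sig ^+ N + sig ^- N != 2) (sigN_neqN2 : sig ^+ N + sig ^- N != -2)
  (stE : in_E0 q sig w1 w2 w3 w4 s t).

Let A0 := rho_a0 N q sig.
Let A1 := rho_a1 q sig w1 w2 w3 w4 s t.
Let Ainf := rho_ainf q sig w1 w2 w3 w4 s t.

Lemma rho_a1_tridiag : A1 = tridiag_mx (fun i => q ^+ (4 * i + 2) * sig * s i)
  (d'_i q sig w1 w2 w3 w4) (fun i => q ^+ 2 / q ^+ (4 * i) * sig^-1 * t (ord_pred i)).
Proof. by []. Qed.

Lemma rho_ainf_tridiag :
  Ainf = tridiag_mx s (d_i q sig w1 w2 w3 w4) (fun i => t (ord_pred i)).
Proof. by []. Qed.

Local Ltac subst_product a b h := match goal with |- ?L = ?R =>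
  let L' := eval pattern a, b in L in let R' := eval pattern a, b in R in
  match L' with ?FL _ _ => match R' with ?FR _ _ =>
    apply: (eq_through_product (L := FL) (R := FR) h);
    [move=> ? ?; rewrite /=; ring | rewrite /=] end end end.

Local Ltac unit_powers :=
  rewrite ?(expr4i_order2N q4N) ?(expr2_order2N q4N) ?(expr4_order2N q4N) ?mulr1.

Local Ltac order_2N := repeat (unit_powers; rewrite exprMn); unit_powers.

Local Ltac denominators_neq0 :=
  rewrite ?mulNr; repeat (apply/andP; split);
  first [ done | exact: expf_neq0
        | by apply: (sqr_sub1_neq0 sig_neq0 sigN_neq2 sigN_neqN2); order_2N
        | by apply: (sqr_sub_sqr_neq0 sig_neq0 sigN_neq2 sigN_neqN2);
             [rewrite ?mulf_neq0 ?expf_neq0 | order_2N] ].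

Local Ltac check_entry j i :=
  rewrite !(mulmx_tridiag_entry, mulmx_diag_entry, mxE) ?ordSK ?ord_predK;
  case: (eqVneq j i) => [->|_];
  [ rewrite ?eqxx ?(eq_ordSF N_gt2) ?(eq_ordSSF N_gt2) ?(eq_ord_predF N_gt2)
      ?(eq_ord_pred2F N_gt2) ?mulr1n /=;
    try subst_product (s i) (t i) (stE i);
    try subst_product (s (ord_pred i)) (t (ord_pred i)) (stE (ord_pred i))
  | rewrite ?mulr0n; repeat case: ifP => _ ];
  rewrite /r_i /kappa /d_i /d'_i /lam /lamp /lamh /lamph
    /sk_c0 /sk_c1 /sk_cinf /sk_gamma ?ord_predK ?ordSK ?expr4_add2
    ?(expr4_ordS q4N) ?(expr4_ord_pred q4N q_neq0);
  field; denominators_neq0.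

Local Ltac to_entries :=
  rewrite rho_a1_tridiag rho_ainf_tridiag /A0 /rho_a0
    -?scalemxAl -?scalemxAr; apply/matrixP.

Lemma rho_relation_cubic :
  skH (q ^+ 2 *: A0) (q ^+ 2 *: A1) (q ^-2 *: Ainf) (sk_c0 w1 w2 w3 w4)
    (sk_c1 w1 w2 w3 w4) (sk_cinf w1 w2 w3 w4) (sk_gamma w1 w2 w3 w4)
    = ((q ^+ 2 + q ^- 2) ^+ 2)%:M.
Proof. by rewrite /skH; to_entries => j i; check_entry j i. Qed.

Lemma rho_relation_0inf :
  q ^+ 2 *: (A0 *m Ainf) - q ^- 2 *: (Ainf *m A0)
    = (q ^+ 4 - q ^- 4) *: A1 + ((q ^+ 2 - q ^- 2) * sk_c1 w1 w2 w3 w4)%:M.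
Proof. by to_entries => j i; check_entry j i. Qed.

Lemma rho_relation_10 :
  q ^+ 2 *: (A1 *m A0) - q ^- 2 *: (A0 *m A1)
    = (q ^+ 4 - q ^- 4) *: Ainf + ((q ^+ 2 - q ^- 2) * sk_cinf w1 w2 w3 w4)%:M.
Proof. by to_entries => j i; check_entry j i. Qed.

Lemma rho_relation_inf1 :
  q ^+ 2 *: (Ainf *m A1) - q ^- 2 *: (A1 *m Ainf)
    = (q ^+ 4 - q ^- 4) *: A0 + ((q ^+ 2 - q ^- 2) * sk_c0 w1 w2 w3 w4)%:M.
Proof. by to_entries => j i; check_entry j i. Qed.

Lemma rho_skein04_rep : skein04_rep q w1 w2 w3 w4 A0 A1 Ainf.
Proof.
split; [exact: rho_relation_cubic | exact: rho_relation_0inf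
       | exact: rho_relation_10 | exact: rho_relation_inf1].
Qed.

End Relations.

Lemma chebT_pair_diag (C : fieldType) n (a : 'I_n -> C) :
    (forall i, a i != 0) -> forall k,
  chebT_pair (\matrix_(j, i) (if j == i then a i + (a i)^-1 else 0)) k =
  (\matrix_(j, i) (if j == i then a i ^+ k + (a i ^+ k)^-1 else 0),
   \matrix_(j, i) (if j == i then a i ^+ k.+1 + (a i ^+ k.+1)^-1 else 0)).
Proof.
move=> a_neq0; elim=> [|k IH] /=.
  by congr pair; apply/matrixP => j i; rewrite !mxE; case: (j == i);
    rewrite ?expr0 ?expr1 ?invr1 ?mulr1n.
rewrite IH; congr pair; apply/matrixP => j i; rewrite !(mulmx_diag_entry, mxE).
case: (j == i) => /=; last by rewrite mul0r subr0.
by rewrite !exprS; field; rewrite a_neq0 expf_neq0.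
Qed.

Lemma chebT_rho_a0 (C : fieldType) N (q sig : C) :
  q ^+ (4 * N) = 1 -> q != 0 -> sig != 0 ->
  chebT_mx (rho_a0 N q sig) N = (sig ^+ N + sig ^- N)%:M.
Proof.
move=> q4N q_neq0 sig_neq0.
have -> : rho_a0 N q sig = \matrix_(j, i)
    (if j == i then q ^+ (4 * i) * sig + (q ^+ (4 * i) * sig)^-1 else 0).
  by apply/matrixP => j i; rewrite !mxE /lam invfM.
rewrite /chebT_mx chebT_pair_diag /=; last by move=> i; rewrite mulf_neq0 ?expf_neq0.
apply/matrixP => j i; rewrite !mxE exprMn -exprM mulnAC exprM q4N expr1n mul1r.
by case: (j == i); rewrite ?mulr1n ?mulr0n.
Qed.

Lemma primitive_root4_order_gt2 (C : nzRingType) N (q : C) :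
  N.-primitive_root (q ^+ 4) -> q ^+ 8 != 1 -> (2 < N)%N.
Proof.
move=> prim; rewrite (_ : 8 = 4 * 2)%N // exprM -(prim_order_dvd prim).
by have := prim_order_gt0 prim; case: N {prim} => [|[|[|]]].
Qed.

Unset Implicit Arguments.
Theorem mainTheorem17 (R : realType) (q : R[i]) (N : nat)
    (z0 sig w1 w2 w3 w4 : R[i]) (s t : 'I_N -> R[i]) :
  (exists n : nat, (0 < n)%N /\ q ^+ n = 1) ->
  q ^+ 8 != 1 ->
  N.-primitive_root (q ^+ 4) ->
  sig != 0 ->
  (q ^+ (N * N)) ^+ 2 * z0 = sig ^+ N + sig ^- N ->
  sig ^+ N + sig ^- N != 2 ->
  sig ^+ N + sig ^- N != - 2 ->
  in_E0 q sig w1 w2 w3 w4 s t ->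
  skein04_rep q w1 w2 w3 w4
    (rho_a0 N q sig) (rho_a1 q sig w1 w2 w3 w4 s t) (rho_ainf q sig w1 w2 w3 w4 s t)
  /\ (q ^+ (N * N)) ^+ 2 *: chebT_mx (rho_a0 N q sig) N = z0%:M.
Proof.
(* The first hypothesis is implied by the third. *)
move=> _ q8 prim sig_neq0 z0E sigN_neq2 sigN_neqN2 stE.
have N_gt2 := primitive_root4_order_gt2 prim q8.
have q4N : q ^+ (4 * N) = 1 by rewrite exprM prim_expr_order.
have q_neq0 : q != 0.
  by move: (prim_root_eq0 prim); rewrite expf_eq0 /= gtn_eqF ?(prim_order_gt0 prim) // => ->.
split; first exact: rho_skein04_rep.
have eps4 : (q ^+ (N * N)) ^+ 2 * (q ^+ (N * N)) ^+ 2 = 1.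
  rewrite -exprD -exprM (_ : (N * N * (2 + 2) = 4 * N * N)%N); last by ring.
  by rewrite exprM q4N expr1n.
by rewrite chebT_rho_a0 // -z0E scale_scalar_mx mulrA eps4 mul1r.
Qed.
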